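(* Let $n\geq 2$, let $F_n$ be the free metabelian Lie algebra generated by $x_1,\ldots,x_n$ over a field $K$ of characteristic zero, and let $F_n'$ be its commutator ideal. For $u\in F_n'$ let $\psi_u=\exp(\mathrm{ad}\,u)=1+\mathrm{ad}\,u$, i.e. $\psi_u(v)=v+[v,u]$ for $v\in F_n$. Then $\psi_u$ maps the algebra $F_n^{S_n}$ of symmetric polynomials into itself (i.e. $\psi_u\in \mathrm{Inn}(F_n^{S_n})$) if and only if $u\in (F_n')^{S_n}$, that is, $u$ is itself symmetric.
   Context: The free metabelian Lie algebra is $F_n=L_n/L_n''$, where $L_n$ is the free Lie algebra on $x_1,\ldots,x_n$. The symmetric group $S_n$ acts on $F_n$ by permuting the generators: $\pi\, p(x_1,\ldots,x_n)=p(x_{\pi(1)},\ldots,x_{\pi(n)})$. An element $p$ is symmetric if $\pi p=p$ for all $\pi\in S_n$; $F_n^{S_n}$ is the algebra of symmetric elements of $F_n$ and $(F_n')^{S_n}=F_n'\cap F_n^{S_n}$. For $u\in F_n'$, $\psi_u$ is an automorphism of $F_n$ (an inner automorphism), and $\mathrm{Inn}(F_n^{S_n})$ denotes the group of inner automorphisms $\psi_u$ of $F_n$ which map $F_n^{S_n}$ into itself. *)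

From HB Require Import structures.
From mathcomp Require Import all_boot all_order all_algebra all_fingroup.
Set Implicit Arguments. Unset Strict Implicit. Unset Printing Implicit Defensive.
Import GRing.Theory.
Local Open Scope ring_scope.

Definition is_lie (K : fieldType) (L : lmodType K) (br : L -> L -> L) : Prop :=
  [/\ (forall (a : K) (u v w : L), br (a *: u + v) w = a *: br u w + br v w),
      (forall (a : K) (u v w : L), br w (a *: u + v) = a *: br w u + br w v),
      (forall u : L, br u u = 0) &
      (forall u v w : L, br (br u v) w + br (br v w) u + br (br w u) v = 0)].

Definition metabelian (K : fieldType) (L : lmodType K) (br : L -> L -> L) : Prop :=
  forall a b c d : L, br (br a b) (br c d) = 0.

Definition lie_hom (K : fieldType) (L M : lmodType K)
  (brL : L -> L -> L) (brM : M -> M -> M) (f : L -> M) : Prop :=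
  (forall (a : K) (u v : L), f (a *: u + v) = a *: f u + f v) /\
  (forall u v : L, f (brL u v) = brM (f u) (f v)).

Definition free_metabelian (K : fieldType) (L : lmodType K) (br : L -> L -> L)
  (n : nat) (x : 'I_n -> L) : Prop :=
  forall (M : lmodType K) (brM : M -> M -> M),
    is_lie brM -> metabelian brM ->
    forall y : 'I_n -> M,
      exists f : L -> M,
        [/\ lie_hom br brM f, (forall i, f (x i) = y i) &
            (forall g : L -> M, lie_hom br brM g -> (forall i, g (x i) = y i) ->
               forall v, g v = f v)].

(* Membership in the commutator ideal L' (span of all brackets;
   for a Lie algebra this span is already an ideal). *)
Definition in_derived (K : fieldType) (L : lmodType K) (br : L -> L -> L)
  (u : L) : Prop :=
  exists s : seq (L * L), u = \sum_(p <- s) br p.1 p.2.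

Definition perm_action (K : fieldType) (L : lmodType K) (br : L -> L -> L)
  (n : nat) (x : 'I_n -> L) (pi : 'S_n) (f : L -> L) : Prop :=
  lie_hom br br f /\ forall i, f (x i) = x (pi i).

Definition is_symmetric (K : fieldType) (L : lmodType K) (br : L -> L -> L)
  (n : nat) (x : 'I_n -> L) (p : L) : Prop :=
  forall (pi : 'S_n) (f : L -> L), perm_action br x pi f -> f p = p.

Definition psi (K : fieldType) (L : lmodType K) (br : L -> L -> L) (u : L)
  (v : L) : L := v + br v u.

(* If u is symmetric, so is psi_u v = v + [v, u] for symmetric v, because the
   permutation action is by Lie homomorphisms.  Conversely, apply the
   hypothesis to the symmetric element s = x_1 + ... + x_n: for every
   permutation pi we get [s, pi u] = [s, u], so d = u - pi u lies in the
   commutator ideal and is killed by ad s.  Sending x_i to (e_i, e_i) in the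
   metabelian algebra K^n ⋉ K[X_1, ..., X_n]^n maps the commutator
   [x_i, x_j, x_k1, ..., x_km] to X_k1 ... X_km (X_j e_i - X_i e_j), and ad s to
   multiplication by -(X_1 + ... + X_n).  In characteristic zero a Koszul-type
   homotopy is a left inverse of this map on the commutator ideal, and
   K[X]^n is torsion free, so d = 0. *)

From HB Require Import structures.
From mathcomp Require Import all_boot all_order all_algebra all_fingroup.
From mathcomp Require Import mpoly ring.
From Stdlib Require Import ClassicalEpsilon.
Import GRing.Theory.
Set Implicit Arguments. Unset Strict Implicit. Unset Printing Implicit Defensive.
Local Open Scope ring_scope.

Section LieAlgebra.
Variables (K : fieldType) (L : lmodType K) (br : L -> L -> L).
Hypothesis lie_br : is_lie br.

Lemma brDl u v w : br (u + v) w = br u w + br v w.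
Proof. by case: lie_br => h _ _ _; have := h 1 u v w; rewrite !scale1r. Qed.

Lemma brDr u v w : br w (u + v) = br w u + br w v.
Proof. by case: lie_br => _ h _ _; have := h 1 u v w; rewrite !scale1r. Qed.

Lemma br0l w : br 0 w = 0.
Proof. by apply: (addrI (br 0 w)); rewrite -brDl !addr0. Qed.

Lemma br0r w : br w 0 = 0.
Proof. by apply: (addrI (br w 0)); rewrite -brDr !addr0. Qed.

Lemma brZl a u w : br (a *: u) w = a *: br u w.
Proof. by case: lie_br => h _ _ _; rewrite -[a *: u]addr0 h br0l addr0. Qed.

Lemma brZr a u w : br w (a *: u) = a *: br w u.
Proof. by case: lie_br => _ h _ _; rewrite -[a *: u]addr0 h br0r addr0. Qed.

Lemma brNl u w : br (- u) w = - br u w.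
Proof. by rewrite -scaleN1r brZl scaleN1r. Qed.

Lemma brNr u w : br w (- u) = - br w u.
Proof. by rewrite -scaleN1r brZr scaleN1r. Qed.

Lemma brBr u v w : br w (u - v) = br w u - br w v.
Proof. by rewrite brDr brNr. Qed.

Lemma br_suml (I : Type) (r : seq I) (P : pred I) (F : I -> L) w :
  br (\sum_(i <- r | P i) F i) w = \sum_(i <- r | P i) br (F i) w.
Proof. exact: (big_morph (br^~ w) (fun a b => brDl a b w) (br0l w)). Qed.

Lemma br_sumr (I : Type) (r : seq I) (P : pred I) (F : I -> L) w :
  br w (\sum_(i <- r | P i) F i) = \sum_(i <- r | P i) br w (F i).
Proof. exact: (big_morph (br w) (fun a b => brDr a b w) (br0r w)). Qed.

Lemma br_anti u v : br u v = - br v u.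
Proof.
case: lie_br => _ _ alt _; apply/eqP; rewrite -subr_eq0 opprK; apply/eqP.
by have := alt (u + v); rewrite brDl !brDr !alt add0r addr0.
Qed.

Lemma jacobi u v w : br (br u v) w + br (br v w) u + br (br w u) v = 0.
Proof. by case: lie_br. Qed.

Lemma in_derivedB u v : in_derived br u -> in_derived br v -> in_derived br (u - v).
Proof.
move=> [s ->] [s' ->]; exists (s ++ [seq (- p.1, p.2) | p <- s']).
by rewrite big_cat big_map -sumrN; congr (_ + _); apply: eq_bigr => p _; rewrite brNl.
Qed.

End LieAlgebra.

Section LieHom.
Variables (K : fieldType) (L M : lmodType K) (brL : L -> L -> L) (brM : M -> M -> M).
Variable f : L -> M.
Hypothesis hom_f : lie_hom brL brM f.

Lemma lie_hom_linear a u v : f (a *: u + v) = a *: f u + f v.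
Proof. by case: hom_f. Qed.

Lemma lie_hom0 : f 0 = 0.
Proof.
apply: (addrI (f 0)); rewrite addr0.
by rewrite -[f 0 + _]scale1r -[X in X + _]scale1r -lie_hom_linear scale1r addr0 scale1r.
Qed.

Lemma lie_homD u v : f (u + v) = f u + f v.
Proof. by rewrite -[u]scale1r lie_hom_linear !scale1r. Qed.

Lemma lie_homZ a u : f (a *: u) = a *: f u.
Proof. by rewrite -[a *: u]addr0 lie_hom_linear lie_hom0 addr0. Qed.

Lemma lie_hom_sum (I : Type) (r : seq I) (P : pred I) (F : I -> L) :
  f (\sum_(i <- r | P i) F i) = \sum_(i <- r | P i) f (F i).
Proof. exact: (big_morph f lie_homD lie_hom0). Qed.

Lemma lie_hom_br u v : f (brL u v) = brM (f u) (f v).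
Proof. by case: hom_f. Qed.

Lemma lie_hom_in_derived u : in_derived brL u -> in_derived brM (f u).
Proof.
case=> s ->; exists [seq (f p.1, f p.2) | p <- s].
by rewrite lie_hom_sum big_map; apply: eq_bigr => p _; rewrite lie_hom_br.
Qed.

End LieHom.

Section Symmetric.
Variables (K : fieldType) (n : nat) (L : lmodType K) (br : L -> L -> L) (x : 'I_n -> L).

Lemma psi_symmetric u v :
  is_symmetric br x u -> is_symmetric br x v -> is_symmetric br x (psi br u v).
Proof.
move=> u_sym v_sym pi f f_pi; have [hom_f _] := f_pi.
by rewrite /psi (lie_homD hom_f) (lie_hom_br hom_f) (v_sym pi f f_pi) (u_sym pi f f_pi).
Qed.

Lemma sum_gens_symmetric : is_symmetric br x (\sum_i x i).
Proof.
move=> pi f [hom_f f_x]; rewrite (lie_hom_sum hom_f).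
under eq_bigr => i _ do rewrite f_x.
by rewrite [RHS](reindex_inj (@perm_inj _ pi)).
Qed.

End Symmetric.

Section Metabelian.
Variables (K : fieldType) (n : nat) (L : lmodType K) (br : L -> L -> L) (x : 'I_n -> L).
Hypotheses (lie_br : is_lie br) (meta_br : metabelian br).

Definition lnbr (w : L) (s : seq 'I_n) : L := foldl (fun w k => br w (x k)) w s.

Lemma lnbr_cons w k s : lnbr w (k :: s) = lnbr (br w (x k)) s.
Proof. by []. Qed.

Lemma lnbr_rcons w k s : lnbr w (rcons s k) = br (lnbr w s) (x k).
Proof. by rewrite /lnbr foldl_rcons. Qed.

Lemma lnbr_linear a u v s : lnbr (a *: u + v) s = a *: lnbr u s + lnbr v s.
Proof.
by elim: s a u v => [//|k s IH] a u v; rewrite !lnbr_cons (brDl lie_br) (brZl lie_br) IH.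
Qed.

Lemma lnbr0 s : lnbr 0 s = 0.
Proof. by elim: s => [//|k s IH]; rewrite lnbr_cons (br0l lie_br). Qed.

Lemma lnbrB u v s : lnbr (u - v) s = lnbr u s - lnbr v s.
Proof. by rewrite (addrC u) -(scaleN1r v) lnbr_linear scaleN1r addrC. Qed.

Lemma lnbrN u s : lnbr (- u) s = - lnbr u s.
Proof. by rewrite -sub0r lnbrB lnbr0 sub0r. Qed.

Lemma lnbr_br a b s : exists a' b', lnbr (br a b) s = br a' b'.
Proof. by elim: s a b => [|k s IH] a b; [exists a, b | apply: IH]. Qed.

Definition centralizes_brackets (w : L) := forall p q, br w (br p q) = 0.

Lemma br_centralizes_brackets a b : centralizes_brackets (br a b).
Proof. by move=> p q; apply: meta_br. Qed.

Lemma br_swap w a b : centralizes_brackets w -> br (br w a) b = br (br w b) a.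
Proof.
move=> cw; have := jacobi lie_br w a b.
rewrite [br (br a b) w](br_anti lie_br) cw oppr0 addr0 [br b w](br_anti lie_br) (brNl lie_br).
by move/eqP; rewrite subr_eq0 => /eqP.
Qed.

Lemma lnbr_perm w s s' : centralizes_brackets w -> perm_eq s s' -> lnbr w s = lnbr w s'.
Proof.
have move_front s1 a s2 w' : centralizes_brackets w' ->
    lnbr w' (s1 ++ a :: s2) = lnbr w' (a :: s1 ++ s2).
  elim: s1 w' => [//|b s1 IH] w' cw'.
  rewrite cat_cons lnbr_cons IH; last exact: br_centralizes_brackets.
  by rewrite !lnbr_cons br_swap.
elim: s w s' => [|a s IH] w s' cw; first by move=> /perm_size /esym /size0nil ->.
move=> ss'; have as' : a \in s' by rewrite -(perm_mem ss') mem_head.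
move: ss'; case/splitPr: as' => p1 p2 ss'.
rewrite move_front // !lnbr_cons; apply: IH; first exact: br_centralizes_brackets.
by rewrite -(perm_cons a) (perm_trans ss') // (perm_catCA p1 [:: a] p2).
Qed.

Lemma lnbr_rem w k s :
  centralizes_brackets w -> k \in s -> lnbr w s = lnbr (br w (x k)) (rem k s).
Proof. by move=> cw ks; rewrite (lnbr_perm cw (perm_to_rem ks)). Qed.

Inductive comm_span : L -> Prop :=
 | comm_span0 : comm_span 0
 | comm_span_linear a u v : comm_span u -> comm_span v -> comm_span (a *: u + v)
 | comm_span_lnbr i j s : comm_span (lnbr (br (x i) (x j)) s).

Lemma comm_spanD u v : comm_span u -> comm_span v -> comm_span (u + v).
Proof. by move=> hu hv; rewrite -[u]scale1r; apply: comm_span_linear. Qed.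

Lemma comm_spanZ a u : comm_span u -> comm_span (a *: u).
Proof. by move=> hu; rewrite -[_ *: u]addr0; apply: comm_span_linear => //; exact: comm_span0. Qed.

Lemma comm_span_sum (I : Type) (r : seq I) (P : pred I) (F : I -> L) :
  (forall i, P i -> comm_span (F i)) -> comm_span (\sum_(i <- r | P i) F i).
Proof. by move=> h; apply: big_ind => //; [apply: comm_span0 | apply: comm_spanD]. Qed.

Lemma comm_span_brx w k : comm_span w -> comm_span (br w (x k)).
Proof.
elim=> [|a u v _ hu _ hv| i j s].
- by rewrite (br0l lie_br); apply: comm_span0.
- by rewrite (brDl lie_br) (brZl lie_br); apply: comm_span_linear.
- by rewrite -lnbr_rcons; apply: comm_span_lnbr.
Qed.

Lemma comm_span_xbr w k : comm_span w -> comm_span (br (x k) w).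
Proof. by move=> hw; rewrite (br_anti lie_br) -scaleN1r; apply/comm_spanZ/comm_span_brx. Qed.

Lemma comm_span_in_derived w : comm_span w -> in_derived br w.
Proof.
elim=> [|a u v _ [p ->] _ [p' ->]| i j s]; first by exists [::]; rewrite big_nil.
- exists ([seq (a *: q.1, q.2) | q <- p] ++ p').
  rewrite big_cat big_map scaler_sumr; congr (_ + _).
  by apply: eq_bigr => q _; rewrite (brZl lie_br).
- by have [a [b ->]] := lnbr_br (x i) (x j) s; exists [:: (a, b)]; rewrite big_seq1.
Qed.

Lemma comm_span_br w w' : comm_span w -> comm_span w' -> br w w' = 0.
Proof.
move=> /comm_span_in_derived [p ->] /comm_span_in_derived [p' ->].
by rewrite (br_suml lie_br) big1 // => q _; rewrite (br_sumr lie_br) big1.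
Qed.

Definition gen_span (v : L) : Prop :=
  exists (c : 'I_n -> K) (w : L), comm_span w /\ v = \sum_i c i *: x i + w.

Lemma gen_span0 : gen_span 0.
Proof.
exists (fun _ => 0), 0; split; first exact: comm_span0.
by rewrite addr0 big1 // => i _; rewrite scale0r.
Qed.

Lemma gen_span_linear a u v : gen_span u -> gen_span v -> gen_span (a *: u + v).
Proof.
move=> [c [w [hw ->]]] [c' [w' [hw' ->]]].
exists (fun i => a * c i + c' i), (a *: w + w'); split; first exact: comm_span_linear.
rewrite scalerDr scaler_sumr addrACA -big_split /=; congr (_ + _).
by apply: eq_bigr => i _; rewrite scalerDl scalerA.
Qed.

Lemma gen_span_x i : gen_span (x i).
Proof.
exists (fun k => (k == i)%:R), 0; split; first exact: comm_span0.
rewrite addr0 (bigD1 i) //= eqxx scale1r big1 ?addr0 // => k /negPf ->.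
by rewrite scale0r.
Qed.

Lemma gen_span_br a b : gen_span a -> gen_span b -> gen_span (br a b).
Proof.
move=> [c [w [hw ->]]] [c' [w' [hw' ->]]].
exists (fun _ => 0), (br (\sum_i c i *: x i + w) (\sum_i c' i *: x i + w')).
split; last by rewrite [X in _ = X + _]big1 ?add0r // => i _; rewrite scale0r.
rewrite (brDl lie_br) !(brDr lie_br) (comm_span_br hw hw') addr0.
apply: comm_spanD; [apply: comm_spanD|].
- rewrite (br_suml lie_br); apply: comm_span_sum => i _.
  rewrite (br_sumr lie_br); apply: comm_span_sum => j _.
  rewrite (brZl lie_br) (brZr lie_br); apply/comm_spanZ/comm_spanZ.
  exact: (comm_span_lnbr i j [::]).
- rewrite (br_suml lie_br); apply: comm_span_sum => i _.
  by rewrite (brZl lie_br); apply/comm_spanZ/comm_span_xbr.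
- rewrite (br_sumr lie_br); apply: comm_span_sum => i _.
  by rewrite (brZr lie_br); apply/comm_spanZ/comm_span_brx.
Qed.

End Metabelian.

Section Generation.
Variables (K : fieldType) (n : nat) (L : lmodType K) (br : L -> L -> L) (x : 'I_n -> L).
Hypotheses (lie_br : is_lie br) (meta_br : metabelian br).

Definition gen_spanb : {pred L} :=
  fun v => if excluded_middle_informative (gen_span br x v) then true else false.

Lemma gen_spanbP v : reflect (gen_span br x v) (v \in gen_spanb).
Proof. by rewrite unfold_in /gen_spanb; case: excluded_middle_informative => h; constructor. Qed.

Lemma gen_spanb_submod_closed : GRing.submod_closed gen_spanb.
Proof.
split; first by apply/gen_spanbP; apply: gen_span0.
by move=> a u v /gen_spanbP hu /gen_spanbP hv; apply/gen_spanbP; apply: gen_span_linear.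
Qed.

HB.instance Definition _ :=
  GRing.isSubmodClosed.Build K L gen_spanb gen_spanb_submod_closed.
Definition gen_sub := {v : L | v \in gen_spanb}.
HB.instance Definition _ := [isSub of gen_sub for @sval L (fun v => v \in gen_spanb)].
HB.instance Definition _ := [Choice of gen_sub by <:].
HB.instance Definition _ := [SubChoice_isSubLmodule of gen_sub by <:].

Lemma gen_sub_br_proof (a b : gen_sub) : br (val a) (val b) \in gen_spanb.
Proof. by apply/gen_spanbP; apply: gen_span_br => //; apply/gen_spanbP; apply: valP. Qed.

Definition gen_sub_br (a b : gen_sub) : gen_sub :=
  Sub (br (val a) (val b)) (gen_sub_br_proof a b).

Lemma val_gen_sub_br a b : val (gen_sub_br a b) = br (val a) (val b).
Proof. exact: SubK. Qed.

Lemma gen_sub_lie : is_lie gen_sub_br.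
Proof.
case: lie_br => h1 h2 h3 h4; split.
- by move=> a u v w; apply: val_inj; rewrite val_gen_sub_br !linearP /= h1.
- by move=> a u v w; apply: val_inj; rewrite val_gen_sub_br !linearP /= h2.
- by move=> u; apply: val_inj; rewrite val_gen_sub_br h3.
- by move=> u v w; apply: val_inj; rewrite !raddfD /= h4.
Qed.

Lemma gen_sub_metabelian : metabelian gen_sub_br.
Proof. by move=> a b c d; apply: val_inj; rewrite /= meta_br. Qed.

(* The inclusion of the subalgebra and the identity both extend x, so by
   uniqueness in the universal property the subalgebra is everything. *)
Lemma free_metabelian_gen_span : free_metabelian br x -> forall v, gen_span br x v.
Proof.
move=> free_x v.
have x_sub i : x i \in gen_spanb by apply/gen_spanbP; apply: gen_span_x.
have [h [[h_lin h_br] h_x _]] :=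
  free_x _ _ gen_sub_lie gen_sub_metabelian (fun i => Sub (x i) (x_sub i)).
have [f [_ _ f_uniq]] := free_x _ _ lie_br meta_br x.
have val_h : forall w, val (h w) = f w.
  apply: f_uniq => [|i]; last by rewrite h_x SubK.
  split=> [a u w'|u w']; first by rewrite h_lin linearP.
  by rewrite h_br val_gen_sub_br.
have id_f : forall w, w = f w by apply: f_uniq.
by apply/gen_spanbP; rewrite (id_f v) -val_h; apply: valP.
Qed.

End Generation.

Section MagnusAlgebra.
Variables (K : fieldType) (n : nat).

(* The semidirect product K^n ⋉ K[X_1..X_n]^n, where a in K^n acts on
   K[X]^n by multiplication with the linear form a_1 X_1 + ... + a_n X_n. *)
Definition magnus := ({ffun 'I_n -> K^o} * {ffun 'I_n -> {mpoly K[n]}})%type.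

Definition linform (a : {ffun 'I_n -> K^o}) : {mpoly K[n]} := \sum_k a k *: 'X_k.

Definition magnus_br (A B : magnus) : magnus :=
  (0, [ffun i => linform B.1 * A.2 i - linform A.1 * B.2 i]).

Definition magnus_gen (i : 'I_n) : magnus :=
  ([ffun k => (k == i)%:R], [ffun k => (k == i)%:R]).

Lemma linform_linear a u v : linform (a *: u + v) = a *: linform u + linform v.
Proof.
rewrite /linform scaler_sumr -big_split /=; apply: eq_bigr => k _.
by rewrite !ffunE scalerDl scalerA.
Qed.

Lemma linform0 : linform 0 = 0.
Proof. by rewrite /linform big1 // => k _; rewrite ffunE scale0r. Qed.

Lemma linformD u v : linform (u + v) = linform u + linform v.
Proof. by rewrite -[u]scale1r linform_linear !scale1r. Qed.

Lemma linform_sum (I : Type) (r : seq I) (P : pred I) (F : I -> {ffun 'I_n -> K^o}) :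
  linform (\sum_(i <- r | P i) F i) = \sum_(i <- r | P i) linform (F i).
Proof. exact: (big_morph linform linformD linform0). Qed.

Lemma linform_delta i : linform [ffun k => (k == i)%:R] = 'X_i.
Proof.
rewrite /linform (bigD1 i) //= ffunE eqxx scale1r big1 ?addr0 // => k /negPf hk.
by rewrite ffunE hk scale0r.
Qed.

Lemma sum_mpolyX_neq0 (i0 : 'I_n) : \sum_i ('X_i : {mpoly K[n]}) != 0.
Proof.
apply/eqP => /(congr1 (mcoeff U_(i0))).
rewrite mcoeff0 raddf_sum (bigD1 i0) //= mcoeffXU eqxx big1 ?addr0 => [|i /negPf i_i0].
  by move/eqP; rewrite oner_eq0.
by rewrite mcoeffXU i_i0.
Qed.

Lemma magnus_lie : is_lie magnus_br.
Proof.
split.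
- move=> a u v w; rewrite /magnus_br; congr (_, _) => /=; first by rewrite scaler0 addr0.
  by apply/ffunP => i; rewrite !ffunE /= linform_linear -!mul_mpolyC; ring.
- move=> a u v w; rewrite /magnus_br; congr (_, _) => /=; first by rewrite scaler0 addr0.
  by apply/ffunP => i; rewrite !ffunE /= linform_linear -!mul_mpolyC; ring.
- by move=> u; rewrite /magnus_br; congr (_, _); apply/ffunP => i; rewrite !ffunE /= subrr.
- move=> u v w; rewrite /magnus_br /=; congr (_, _) => /=; first by rewrite !addr0.
  by apply/ffunP => i; rewrite !ffunE /= linform0; ring.
Qed.

Lemma magnus_metabelian : metabelian magnus_br.
Proof.
move=> a b c d; rewrite /magnus_br /= linform0; congr (_, _).
by apply/ffunP => i; rewrite !ffunE /= !mul0r subrr.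
Qed.

Definition mseq (m : 'X_{1..n}) : seq 'I_n := flatten [seq nseq (m c) c | c <- enum 'I_n].

Definition mmon (s : seq 'I_n) : 'X_{1..n} := (\sum_(k <- s) U_(k))%MM.

Lemma count_mseq m k : count_mem k (mseq m) = m k.
Proof.
rewrite count_flatten sumnE !big_map -enumT big_enum /= (bigD1 k) //=.
rewrite count_nseq /= eqxx mul1n big1 ?addn0 // => c /negPf.
by rewrite count_nseq /= eq_sym => ->.
Qed.

Lemma mmon_cons k s : mmon (k :: s) = (U_(k) + mmon s)%MM.
Proof. by rewrite /mmon big_cons. Qed.

Lemma mmonE s k : mmon s k = count_mem k s.
Proof.
elim: s => [|a s IH]; first by rewrite /mmon big_nil mnm0E.
by rewrite mmon_cons mnmDE IH mnm1E /= eq_sym.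
Qed.

Lemma perm_mseq_mmon s : perm_eq (mseq (mmon s)) s.
Proof. by apply/allP => y _; rewrite /= count_mseq mmonE. Qed.

Lemma mdeg_mmon s : mdeg (mmon s) = size s.
Proof.
elim: s => [|a s IH]; first by rewrite /mmon big_nil mdeg0.
by rewrite mmon_cons mdegD mdeg1 IH.
Qed.

End MagnusAlgebra.

Section MagnusEmbedding.
Variables (K : fieldType) (n : nat) (L : lmodType K) (br : L -> L -> L) (x : 'I_n -> L).
Hypotheses (lie_br : is_lie br) (meta_br : metabelian br).
Hypothesis charK : [pchar K] =i pred0.
Variable phi : L -> magnus K n.
Hypothesis hom_phi : lie_hom br (@magnus_br K n) phi.
Hypothesis phi_x : forall i, phi (x i) = magnus_gen K i.

Definition phi_ab v := (phi v).1.
Definition phi_mod v := (phi v).2.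

Lemma phi_ab_linear a u v : phi_ab (a *: u + v) = a *: phi_ab u + phi_ab v.
Proof. by rewrite /phi_ab (lie_hom_linear hom_phi). Qed.

Lemma phi_abD u v : phi_ab (u + v) = phi_ab u + phi_ab v.
Proof. by rewrite -[u]scale1r phi_ab_linear !scale1r. Qed.

Lemma phi_abZ a u : phi_ab (a *: u) = a *: phi_ab u.
Proof. by rewrite /phi_ab (lie_homZ hom_phi). Qed.

Lemma phi_ab_sum (I : Type) (r : seq I) (P : pred I) (F : I -> L) :
  phi_ab (\sum_(i <- r | P i) F i) = \sum_(i <- r | P i) phi_ab (F i).
Proof. by apply: (big_morph phi_ab phi_abD); rewrite /phi_ab (lie_hom0 hom_phi). Qed.

Lemma phi_ab_in_derived w : in_derived br w -> phi_ab w = 0.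
Proof.
by case=> s ->; rewrite phi_ab_sum big1 // => p _; rewrite /phi_ab (lie_hom_br hom_phi).
Qed.

Lemma phi_ab_x i : phi_ab (x i) = [ffun k => (k == i)%:R].
Proof. by rewrite /phi_ab phi_x. Qed.

Lemma phi_mod_linear a u v : phi_mod (a *: u + v) = a *: phi_mod u + phi_mod v.
Proof. by rewrite /phi_mod (lie_hom_linear hom_phi). Qed.

Lemma phi_mod0 : phi_mod 0 = 0.
Proof. by rewrite /phi_mod (lie_hom0 hom_phi). Qed.

Lemma phi_mod_br a b :
  phi_mod (br a b) =
  [ffun i => linform (phi_ab b) * phi_mod a i - linform (phi_ab a) * phi_mod b i].
Proof. by rewrite /phi_mod (lie_hom_br hom_phi). Qed.

Lemma phi_mod_x i : phi_mod (x i) = [ffun k => (k == i)%:R].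
Proof. by rewrite /phi_mod phi_x. Qed.

Lemma phi_mod_lnbr w s : phi_ab w = 0 ->
  phi_mod (lnbr br x w s) = [ffun c => 'X_[mmon s] * phi_mod w c].
Proof.
elim: s w => [|k s IH] w w0.
  by apply/ffunP => c; rewrite ffunE /mmon big_nil mpolyX0 mul1r.
rewrite lnbr_cons IH; last by apply/phi_ab_in_derived; exists [:: (w, x k)]; rewrite big_seq1.
apply/ffunP => c; rewrite !ffunE phi_mod_br ffunE w0 linform0 mul0r subr0.
by rewrite phi_ab_x linform_delta mmon_cons mpolyXD mulrA [_ * 'X_[U_(k)]]mulrC.
Qed.

Lemma phi_mod_comm i j s c :
  phi_mod (lnbr br x (br (x i) (x j)) s) c =
  'X_[mmon (j :: s)] *+ (c == i) - 'X_[mmon (i :: s)] *+ (c == j).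
Proof.
rewrite phi_mod_lnbr; last by apply/phi_ab_in_derived; exists [:: (x i, x j)]; rewrite big_seq1.
rewrite ffunE phi_mod_br ffunE !phi_ab_x !linform_delta !phi_mod_x !ffunE.
rewrite mulrBr !mulrA !mulr_natr !mmon_cons !mpolyXD.
by rewrite [_ * 'X_j]mulrC [_ * 'X_i]mulrC.
Qed.

Definition ksum (c : 'I_n) (q : seq 'I_n) : L :=
  \sum_(k <- q) lnbr br x (br (x k) (x c)) (rem k q).

(* A contracting homotopy of Koszul type; the division by the degree, which
   needs characteristic zero, is what makes [homotopy_seq_comm] hold. *)
Definition homotopy_seq (c : 'I_n) (q : seq 'I_n) : L :=
  - ((size q).+1%:R : K)^-1 *: ksum c q.

Definition homotopy (c : 'I_n) (m : 'X_{1..n}) : L := homotopy_seq c (mseq m).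

(* The degree bound B only keeps the sum finite. *)
Definition phi_inv (B : nat) (G : {ffun 'I_n -> {mpoly K[n]}}) : L :=
  \sum_c \sum_(m : 'X_{1..n < B}) (G c)@_m *: homotopy c m.

Lemma ksum_cons c j s :
  ksum c (j :: s) = lnbr br x (br (x j) (x c)) s +
                    \sum_(k <- s) lnbr br x (br (br (x k) (x c)) (x j)) (rem k s).
Proof.
rewrite /ksum big_cons /= eqxx; congr (_ + _).
rewrite big_seq_cond [RHS]big_seq_cond; apply: eq_bigr => k /andP[ks _].
rewrite -[in RHS]lnbr_cons.
apply: (lnbr_perm x lie_br meta_br (br_centralizes_brackets meta_br _ _)).
by rewrite /=; case: eqP => [->|//]; apply: perm_to_rem.
Qed.

Lemma jacobi_gens i j k :
  br (br (x k) (x j)) (x i) - br (br (x k) (x i)) (x j) = br (br (x i) (x j)) (x k).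
Proof.
have := jacobi lie_br (x k) (x i) (x j).
rewrite [br (x j) (x k)](br_anti lie_br) (brNl lie_br) addrAC => /eqP.
by rewrite addr_eq0 => /eqP/(congr1 -%R); rewrite opprB opprK.
Qed.

Lemma ksum_swap i j s :
  ksum j (i :: s) - ksum i (j :: s) = (size s).+2%:R *: lnbr br x (br (x i) (x j)) s.
Proof.
set A := lnbr br x (br (x i) (x j)) s.
have jacobi_terms :
    \sum_(k <- s) lnbr br x (br (br (x k) (x j)) (x i)) (rem k s)
  - \sum_(k <- s) lnbr br x (br (br (x k) (x i)) (x j)) (rem k s) = A *+ size s.
  rewrite -sumrB big_seq (eq_bigr (fun=> A)) => [|k ks].
    by rewrite -big_seq big_const_seq count_predT iter_addr_0.
  by rewrite -(lnbrB x lie_br) jacobi_gens -(lnbr_rem x lie_br meta_br).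
rewrite !ksum_cons [br (x j) (x i)](br_anti lie_br) (lnbrN x lie_br) -/A.
by rewrite opprD opprK addrACA jacobi_terms scaler_nat !mulrS addrA.
Qed.

Lemma homotopy_seq_comm i j s :
  homotopy_seq i (j :: s) - homotopy_seq j (i :: s) = lnbr br x (br (x i) (x j)) s.
Proof.
rewrite /homotopy_seq /= !scaleNr opprK addrC -scalerBr ksum_swap scalerA.
by rewrite mulVf ?scale1r //; move/pcharf0P: charK => ->.
Qed.

Lemma homotopy_seq_perm c q s : perm_eq q s -> homotopy_seq c q = homotopy_seq c s.
Proof.
move=> qs; rewrite /homotopy_seq /ksum (perm_size qs) (perm_big s qs) /=.
congr (_ *: _); apply: eq_big_seq => k ks.
apply: (lnbr_perm x lie_br meta_br (br_centralizes_brackets meta_br _ _)).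
rewrite -(perm_cons k); apply: perm_trans (perm_trans _ qs) (perm_to_rem ks).
by rewrite perm_sym perm_to_rem // (perm_mem qs).
Qed.

Lemma phi_inv_linear B a G H : phi_inv B (a *: G + H) = a *: phi_inv B G + phi_inv B H.
Proof.
rewrite /phi_inv scaler_sumr -big_split; apply: eq_bigr => c _ /=.
rewrite scaler_sumr -big_split; apply: eq_bigr => m _ /=.
by rewrite !ffunE /= mcoeffD mcoeffZ scalerDl -scalerA.
Qed.

Lemma phi_inv0 B : phi_inv B 0 = 0.
Proof.
by rewrite /phi_inv big1 // => c _; rewrite big1 // => m _; rewrite ffunE mcoeff0 scale0r.
Qed.

Lemma sum_mulrn_eq (V : 'I_n -> L) (i : 'I_n) : \sum_c V c *+ (c == i) = V i.
Proof.
rewrite (bigD1 i) //= eqxx mulr1n big1 ?addr0 // => c /negPf ->.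
by rewrite mulr0n.
Qed.

Lemma sum_bmnm_mcoeffX B (m0 : 'X_{1..n}) (V : 'X_{1..n} -> L) : (mdeg m0 < B)%N ->
  \sum_(m : 'X_{1..n < B}) ('X_[m0] : {mpoly K[n]})@_m *: V m = V m0.
Proof.
move=> m0B; rewrite (bigD1 (BMultinom m0B)) //= mcoeffX eqxx scale1r big1 ?addr0 //.
move=> m m_neq; rewrite mcoeffX; case: eqP => [m0m|_]; last by rewrite mulr0n scale0r.
by move: m_neq; rewrite (_ : m = BMultinom m0B) ?eqxx //; apply: val_inj; rewrite /= m0m.
Qed.

Lemma phi_inv_comm B i j s : ((size s).+1 < B)%N ->
  phi_inv B (phi_mod (lnbr br x (br (x i) (x j)) s)) = lnbr br x (br (x i) (x j)) s.
Proof.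
move=> sB; rewrite /phi_inv exchange_big /=.
under eq_bigr => m _ do under eq_bigr => c _ do
  rewrite phi_mod_comm mcoeffB !mcoeffMn scalerBl -!scalerMnl.
under eq_bigr => m _ do rewrite sumrB !sum_mulrn_eq.
rewrite sumrB !sum_bmnm_mcoeffX ?mdeg_mmon //.
rewrite /homotopy (homotopy_seq_perm _ (perm_mseq_mmon (j :: s))).
by rewrite (homotopy_seq_perm _ (perm_mseq_mmon (i :: s))) homotopy_seq_comm.
Qed.

Lemma phi_inv_comm_span w : comm_span br x w ->
  exists B0, forall B, (B0 <= B)%N -> phi_inv B (phi_mod w) = w.
Proof.
elim=> [|a u v _ [B1 inv_u] _ [B2 inv_v]| i j s].
- by exists 0 => B _; rewrite phi_mod0 phi_inv0.
- exists (maxn B1 B2) => B; rewrite geq_max => /andP[B1B B2B].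
  by rewrite phi_mod_linear phi_inv_linear inv_u ?inv_v.
- by exists (size s).+2 => B; apply: phi_inv_comm.
Qed.

Lemma phi_mod_inj_comm_span w : comm_span br x w -> phi_mod w = 0 -> w = 0.
Proof.
move=> /phi_inv_comm_span [B0 inv_w] w0.
by rewrite -(inv_w B0 (leqnn _)) w0 phi_inv0.
Qed.

Lemma gen_span_phi_ab0 d : gen_span br x d -> phi_ab d = 0 -> comm_span br x d.
Proof.
case=> c [w [w_comm ->]] d0.
have w0 := phi_ab_in_derived (comm_span_in_derived lie_br w_comm).
have c0 k : c k = 0.
  have := congr1 (fun a : {ffun 'I_n -> K^o} => a k) d0.
  rewrite /= phi_abD w0 addr0 phi_ab_sum sum_ffunE ffunE => <-.
  rewrite (bigD1 k) //= big1 ?addr0 => [|i /negPf ik]; rewrite phi_abZ phi_ab_x !ffunE.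
    by rewrite eqxx [_ *: _]mulr1.
  by rewrite eq_sym ik [_ *: _]mulr0.
by rewrite big1 ?add0r // => i _; rewrite c0 scale0r.
Qed.

Lemma phi_mod_br_sum_gens d : phi_ab d = 0 ->
  phi_mod (br (\sum_i x i) d) = [ffun c => - ((\sum_i 'X_i) * phi_mod d c)].
Proof.
move=> d0; apply/ffunP => c; rewrite phi_mod_br !ffunE d0 linform0 mul0r sub0r.
by rewrite phi_ab_sum linform_sum; under eq_bigr => i _ do rewrite phi_ab_x linform_delta.
Qed.

Lemma sum_gens_br_eq0 (i0 : 'I_n) d :
  gen_span br x d -> phi_ab d = 0 -> br (\sum_i x i) d = 0 -> d = 0.
Proof.
move=> d_gen d0 br0; apply: phi_mod_inj_comm_span; first exact: gen_span_phi_ab0.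
apply/ffunP => c; have := congr1 (fun v => phi_mod v c) br0.
rewrite phi_mod_br_sum_gens // phi_mod0 !ffunE => /eqP.
by rewrite oppr_eq0 mulf_eq0 (negPf (sum_mpolyX_neq0 _ i0)) => /eqP.
Qed.

End MagnusEmbedding.

Section FreeMetabelian.
Variables (K : fieldType) (n : nat) (L : lmodType K) (br : L -> L -> L) (x : 'I_n -> L).
Hypotheses (lie_br : is_lie br) (meta_br : metabelian br).
Hypothesis charK : [pchar K] =i pred0.
Hypothesis free_x : free_metabelian br x.

Lemma free_metabelian_sum_gens_br_inj (i0 : 'I_n) u u' :
  in_derived br u -> in_derived br u' -> br (\sum_i x i) u = br (\sum_i x i) u' -> u = u'.
Proof.
move=> du du' e; apply/eqP; rewrite -subr_eq0; apply/eqP.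
have [phi [hom_phi phi_x _]] :=
  free_x (@magnus_lie K n) (@magnus_metabelian K n) (@magnus_gen K n).
apply: (sum_gens_br_eq0 lie_br meta_br charK hom_phi phi_x i0).
- exact: free_metabelian_gen_span.
- exact (phi_ab_in_derived hom_phi (in_derivedB lie_br du du')).
- by rewrite (brBr lie_br) e subrr.
Qed.

End FreeMetabelian.

Unset Implicit Arguments.

Theorem theorem2p1 (K : fieldType) (charK : [pchar K] =i pred0)
  (n : nat) (hn : (2 <= n)%N)
  (L : lmodType K) (br : L -> L -> L) (hL : is_lie br) (hmeta : metabelian br)
  (x : 'I_n -> L) (hfree : free_metabelian br x)
  (u : L) (hu : in_derived br u) :
  (forall v : L, is_symmetric br x v -> is_symmetric br x (psi br u v))
  <-> is_symmetric br x u.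
Proof.
split=> [psi_sym | u_sym v v_sym]; last exact: psi_symmetric.
move=> pi f f_pi; have [hom_f _] := f_pi.
have s_sym := @sum_gens_symmetric _ _ _ br x.
have := psi_sym _ s_sym pi f f_pi.
rewrite /psi (lie_homD hom_f) (lie_hom_br hom_f) (s_sym pi f f_pi) => /addrI.
have i0 : 'I_n := Ordinal (ltnW hn).
exact: free_metabelian_sum_gens_br_inj hL hmeta charK hfree i0 _ _
  (lie_hom_in_derived hom_f hu) hu.
Qed.
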